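(* Let $\mathbf A$ be a modular pseudo-Kleene lattice. For any $x,y\in A$, $x\,\mathrm C\,y$ holds if and only if the subalgebra $\mathbf{Sg}(x,y)$ of $\mathbf A$ generated by $x,y$ is a Kleene lattice (i.e. is distributive).
   Context: A pseudo-Kleene lattice is an algebra $(A,\land,\lor,{}',0,1)$ that is a bounded lattice with an antitone involution ${}'$ ($x\leq y\Rightarrow y'\leq x'$, $x''=x$) satisfying $x\land x'\leq y\lor y'$; it is modular if its lattice reduct is modular. For $a,b\in A$, $a\,\mathrm C\,b$ ($a$ commutes with $b$) means: (C1) $a\land(b\lor b')=(a\land b)\lor(a\land b')$; (C2) $b\land(a\lor a')=(b\land a)\lor(b\land a')$; (C3) $a\land a'=((a\land a')\land b)\lor((a\land a')\land b')$. $\mathbf{Sg}(x,y)$ is the smallest subset containing $x,y,0,1$ and closed under $\land,\lor,{}'$. *)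

From HB Require Import structures.
From mathcomp Require Import all_boot all_order.
Set Implicit Arguments. Unset Strict Implicit. Unset Printing Implicit Defensive.
Import Order.Theory.
Local Open Scope order_scope.

Section PKL.
Context {d : Order.disp_t} {L : tbLatticeType d}.

Definition antitone_involution (c : L -> L) : Prop :=
  (forall x y : L, x <= y -> c y <= c x) /\ (forall x : L, c (c x) = x).

Definition pseudo_kleene (c : L -> L) : Prop :=
  antitone_involution c /\ (forall x y : L, x `&` c x <= y `|` c y).

Definition modular_lattice : Prop :=
  forall x y z : L, x <= z -> x `|` (y `&` z) = (x `|` y) `&` z.

(** a C b : conditions (C1), (C2), (C3) *)
Definition commutes (c : L -> L) (a b : L) : Prop :=
  [/\ a `&` (b `|` c b) = (a `&` b) `|` (a `&` c b),
      b `&` (a `|` c a) = (b `&` a) `|` (b `&` c a)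
    & a `&` c a = ((a `&` c a) `&` b) `|` ((a `&` c a) `&` c b)].

Inductive Sg (c : L -> L) (x y : L) : L -> Prop :=
  | Sg_x : Sg c x y x
  | Sg_y : Sg c x y y
  | Sg_bot : Sg c x y \bot
  | Sg_top : Sg c x y \top
  | Sg_meet a b : Sg c x y a -> Sg c x y b -> Sg c x y (a `&` b)
  | Sg_join a b : Sg c x y a -> Sg c x y b -> Sg c x y (a `|` b)
  | Sg_compl a : Sg c x y a -> Sg c x y (c a).

Definition Sg_distributive (c : L -> L) (x y : L) : Prop :=
  forall a b e : L, Sg c x y a -> Sg c x y b -> Sg c x y e ->
    a `&` (b `|` e) = (a `&` b) `|` (a `&` e).

End PKL.

From HB Require Import structures.
From mathcomp Require Import all_boot all_order.
Set Implicit Arguments. Unset Strict Implicit. Unset Printing Implicit Defensive.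
Import Order.Theory.
Local Open Scope order_scope.

(* In a modular lattice, if [D] is a distributive bounded sublattice and [z]
   distributes over [D], then [{a `|` (z `&` b) | a <= b in D}] is a distributive
   sublattice containing [D] and [z].  If [x C y], start from the six-element
   sublattice generated by [x] and [c x]: (C2) makes [y] distribute over it, and
   (C1)-(C3), transported by De Morgan and by the symmetry of [C], make [c y]
   distribute over the extension by [y].  The second extension contains [x],
   [c x], [y] and [c y], hence all of [Sg(x, y)]. *)

Ltac lat := match goal with
 | |- is_true (_ <= _ `&` _) => rewrite lexI; apply/andP; split; lat
 | |- is_true (_ `|` _ <= _) => rewrite leUx; apply/andP; split; lat
 | |- is_true (?a <= ?a) => exact: lexx
 | |- _ => first [ exact: le0x | exact: lex1 | assumption
                 | (apply: leIxl; lat) | (apply: leIxr; lat)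
                 | (apply: lexUl; lat) | (apply: lexUr; lat) ]
 end.
Ltac latE := apply/le_anti/andP; split; lat.

Section Sublattices.
Context {d : Order.disp_t} {L : tbLatticeType d}.

Definition meetU_distr (a b e : L) : Prop := a `&` (b `|` e) = (a `&` b) `|` (a `&` e).
Definition joinI_distr (a b e : L) : Prop := a `|` (b `&` e) = (a `|` b) `&` (a `|` e).
Definition distr_over (z : L) (D : L -> Prop) : Prop :=
  forall s t, D s -> D t -> meetU_distr z s t.

Record sublattice (D : L -> Prop) : Prop := Sublattice {
  sub0 : D \bot;
  sub1 : D \top;
  subI : forall a b, D a -> D b -> D (a `&` b);
  subU : forall a b, D a -> D b -> D (a `|` b) }.

Record distr_sublattice (D : L -> Prop) : Prop := DistrSublattice {
  distr_sub :> sublattice D;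
  sub_distr : forall a b e, D a -> D b -> D e -> meetU_distr a b e }.

Lemma meetU_distrC a b e : meetU_distr a b e -> meetU_distr a e b.
Proof. by rewrite /meetU_distr joinC => ->; rewrite joinC. Qed.

Definition pair_lattice (p q s : L) : Prop :=
  s = \bot \/ s = p `&` q \/ s = p \/ s = q \/ s = p `|` q \/ s = \top.

Lemma pair_lattice_cases p q s t : pair_lattice p q s -> pair_lattice p q t ->
  [\/ s <= t, t <= s, s = p /\ t = q | s = q /\ t = p].
Proof.
by case=> [|[|[|[|[|]]]]] ->; case=> [|[|[|[|[|]]]]] ->;
  first [ apply: Or41; lat | apply: Or42; lat | apply: Or43; done | apply: Or44; done].
Qed.

Lemma pair_distr_over p q z : meetU_distr z p q -> distr_over z (pair_lattice p q).
Proof.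
move=> hz s t hs ht; rewrite /meetU_distr.
case: (pair_lattice_cases hs ht) => [l|l|[-> ->]|[-> ->]] //.
- by rewrite (join_r l) join_r //; apply: leI2.
- by rewrite (join_l l) join_l //; apply: leI2.
- exact: meetU_distrC.
Qed.

Lemma pair_lattice_distr p q : distr_sublattice (pair_lattice p q).
Proof.
split; first split.
- by left.
- by do 5 right.
- move=> s t hs ht; case: (pair_lattice_cases hs ht) => [l|l|[-> ->]|[-> ->]].
  + by rewrite (meet_l l).
  + by rewrite (meet_r l).
  + by right; left.
  + by right; left; rewrite meetC.
- move=> s t hs ht; case: (pair_lattice_cases hs ht) => [l|l|[-> ->]|[-> ->]].
  + by rewrite (join_r l).
  + by rewrite (join_l l).
  + by do 4 right; left.
  + by do 4 right; left; rewrite joinC.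
- move=> a b e ha; apply: pair_distr_over.
  by case: ha => [|[|[|[|[|]]]]] ->; rewrite /meetU_distr; latE.
Qed.

Definition adjoin (D : L -> Prop) (z u : L) : Prop :=
  exists a b, [/\ D a, D b, a <= b & u = a `|` (z `&` b)].

End Sublattices.

Section Modular.
Context {d : Order.disp_t} {L : tbLatticeType d}.
Hypothesis hmod : @modular_lattice d L.

Lemma meetU_distr_rot (a b e : L) : meetU_distr a b e -> meetU_distr e a b.
Proof.
rewrite /meetU_distr => h.
have -> : e `&` (a `|` b) = e `&` ((a `&` (b `|` e)) `|` b).
  have -> : (a `&` (b `|` e)) `|` b = (b `|` a) `&` (b `|` e).
    by rewrite joinC hmod //; lat.
  latE.
rewrite h.
have -> : a `&` b `|` a `&` e `|` b = (a `&` e) `|` b by latE.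
rewrite meetC -hmod ?leIr //; latE.
Qed.

Lemma meetU_distr_joinI (a b e : L) : meetU_distr a b e -> joinI_distr a b e.
Proof.
move=> /meetU_distrC /meetU_distr_rot h.
rewrite /joinI_distr -hmod; last by lat.
rewrite h; latE.
Qed.

Lemma meet_adjoinE (w z a b : L) : a <= b -> meetU_distr w a z ->
  w `&` (a `|` (z `&` b)) = (w `&` a) `|` ((z `&` w) `&` b).
Proof.
move=> lab h.
rewrite (@hmod _ z _ lab) meetA h (meetC z w) -hmod //.
exact: le_trans (leIr _ _) lab.
Qed.

Section Adjoin.
Variables (D : L -> Prop) (z : L).
Hypotheses (hD : distr_sublattice D) (hz : distr_over z D).

Lemma adjoin_joinE a1 b1 a2 b2 : D b1 -> D b2 ->
  (a1 `|` (z `&` b1)) `|` (a2 `|` (z `&` b2)) = (a1 `|` a2) `|` (z `&` (b1 `|` b2)).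
Proof. by move=> h1 h2; rewrite (hz h1 h2) joinACA. Qed.

Lemma adjoin_meetE a1 b1 a2 b2 : D a1 -> D a2 -> a1 <= b1 -> a2 <= b2 ->
  (a1 `|` (z `&` b1)) `&` (a2 `|` (z `&` b2)) = (a1 `&` a2) `|` (z `&` (b1 `&` b2)).
Proof.
move=> h1 h2 l1 l2.
rewrite (hmod _ l1) (hmod _ l2) (hmod _ (leI2 l1 l2)).
rewrite (joinC (a1 `&` a2) z) (meetU_distr_joinI (hz h1 h2)) (joinC z a1) (joinC z a2).
by rewrite meetACA.
Qed.

Lemma mem_adjoin u : D u -> adjoin D z u.
Proof. by move=> h; exists u, u; split; rewrite ?lexx ?meetKUC. Qed.

Lemma adjoin_self : adjoin D z z.
Proof.
exists \bot, \top; split; [exact: sub0 hD | exact: sub1 hD | exact: le0x |].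
by rewrite meetx1 join0x.
Qed.

Lemma adjoin_distr : distr_sublattice (adjoin D z).
Proof.
split; first split.
- exact: mem_adjoin (sub0 hD).
- exact: mem_adjoin (sub1 hD).
- move=> _ _ [a1 [b1 [h1 k1 l1 ->]]] [a2 [b2 [h2 k2 l2 ->]]].
  exists (a1 `&` a2), (b1 `&` b2); split.
  + exact (subI hD h1 h2).
  + exact (subI hD k1 k2).
  + exact: leI2.
  + exact: adjoin_meetE.
- move=> _ _ [a1 [b1 [h1 k1 l1 ->]]] [a2 [b2 [h2 k2 l2 ->]]].
  exists (a1 `|` a2), (b1 `|` b2); split.
  + exact (subU hD h1 h2).
  + exact (subU hD k1 k2).
  + exact: leU2.
  + exact: adjoin_joinE.
- move=> _ _ _ [a1 [b1 [h1 k1 l1 ->]]] [a2 [b2 [h2 k2 l2 ->]]] [a3 [b3 [h3 k3 l3 ->]]].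
  have h23 := subU hD h2 h3; have k12 := subI hD k1 k2; have k13 := subI hD k1 k3.
  rewrite /meetU_distr adjoin_joinE // adjoin_meetE ?leU2 //.
  rewrite !adjoin_meetE // adjoin_joinE //.
  by rewrite (sub_distr hD h1 h2 h3) (sub_distr hD k1 k2 k3).
Qed.

Lemma distr_over_adjoin w : distr_over w D -> distr_over (z `&` w) D ->
  (forall a, D a -> meetU_distr a z w) -> distr_over w (adjoin D z).
Proof.
move=> hw hzw hDzw _ _ [a1 [b1 [ha1 hb1 l1 ->]]] [a2 [b2 [ha2 hb2 l2 ->]]].
have hU := subU hD ha1 ha2.
rewrite /meetU_distr adjoin_joinE //.
rewrite !meet_adjoinE ?leU2 //; try exact/meetU_distr_rot/hDzw.
by rewrite (hw _ _ ha1 ha2) (hzw _ _ hb1 hb2) joinACA.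
Qed.

End Adjoin.
End Modular.

Section Involution.
Context {d : Order.disp_t} {L : tbLatticeType d}.
Variable c : L -> L.
Hypothesis hc : antitone_involution c.

Lemma cK a : c (c a) = a. Proof. exact: hc.2. Qed.

Lemma le_c a b : a <= b -> c b <= c a. Proof. exact: hc.1. Qed.

Lemma cU a b : c (a `|` b) = c a `&` c b.
Proof.
apply/le_anti/andP; split; first by rewrite lexI !le_c //; lat.
by rewrite -[X in X <= _]cK le_c // leUx -[a]cK -[b]cK !le_c ?cK //; lat.
Qed.

Lemma cI a b : c (a `&` b) = c a `|` c b.
Proof. by rewrite -[a]cK -[b]cK -cU !cK. Qed.

Lemma c0 : c \bot = \top.
Proof. by apply/le_anti; rewrite lex1 /= -[X in X <= _]cK le_c ?le0x. Qed.

Lemma c1 : c \top = \bot.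
Proof. by rewrite -c0 cK. Qed.

Lemma meetU_distr_c (hmod : @modular_lattice d L) a b e :
  meetU_distr a b e -> meetU_distr (c a) (c b) (c e).
Proof. by move=> /(meetU_distr_joinI hmod) /(congr1 c); rewrite cU cI !cI !cU. Qed.

Lemma meetU_distr_cl (hmod : @modular_lattice d L) a b :
  meetU_distr a b (c b) -> meetU_distr (c a) b (c b).
Proof. by move=> /(meetU_distr_c hmod); rewrite cK => /meetU_distrC. Qed.

Lemma Sg_sub (S : L -> Prop) x y : sublattice S ->
  S x -> S (c x) -> S y -> S (c y) -> forall s, Sg c x y s -> S s.
Proof.
move=> hS hx hcx hy hcy s hs.
suff : S s /\ S (c s) by case.
elim: hs => {s} [||||a b _ [ha hca] _ [hb hcb]|a b _ [ha hca] _ [hb hcb]|a _ [ha hca]].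
- by [].
- by [].
- by rewrite c0; split; [exact: sub0 hS | exact: sub1 hS].
- by rewrite c1; split; [exact: sub1 hS | exact: sub0 hS].
- by rewrite cI; split; [exact (subI hS ha hb) | exact (subU hS hca hcb)].
- by rewrite cU; split; [exact (subU hS ha hb) | exact (subI hS hca hcb)].
- by rewrite cK.
Qed.

End Involution.

Section PseudoKleene.
Context {d : Order.disp_t} {L : tbLatticeType d}.
Variable c : L -> L.
Hypotheses (hpk : pseudo_kleene c) (hmod : @modular_lattice d L).

Lemma commutes_pair a b : commutes c a b ->
  forall u, pair_lattice a (c a) u -> meetU_distr u b (c b).
Proof.
case=> C1 _ C3.
have Cp : meetU_distr (a `&` c a) b (c b).
  by rewrite /meetU_distr (meet_l (hpk.2 a b)).
move=> u; case=> [|[|[|[|[|]]]]] ->.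
- by rewrite /meetU_distr; latE.
- exact: Cp.
- exact: C1.
- exact: (meetU_distr_cl hpk.1 hmod).
- by have := meetU_distr_cl hpk.1 hmod Cp; rewrite (cI hpk.1) (cK hpk.1) joinC.
- by rewrite /meetU_distr; latE.
Qed.

Lemma compl_meet_join_le a b : commutes c a b ->
  c a `&` (a `|` (b `&` c b)) <= (a `&` c a) `|` ((b `&` c b) `&` c a).
Proof.
move=> hab; case: (hab) => C1 C2 _.
have C2c := meetU_distr_cl hpk.1 hmod C2.
have h1 : c a `&` (a `|` b) <= (a `&` c a) `|` b.
  by rewrite joinC (meetU_distr_rot hmod C2); lat.
have h2 : c a `&` (a `|` c b) <= (a `&` c a) `|` c b.
  by rewrite joinC (meetU_distr_rot hmod C2c); lat.
have hp : joinI_distr (a `&` c a) b (c b).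
  by apply: (meetU_distr_joinI hmod); apply: (commutes_pair hab); right; left.
rewrite (@hmod (a `&` c a) (b `&` c b) (c a)) ?leIr // hp (meetU_distr_joinI hmod C1).
rewrite !lexI; apply/andP; split; first (apply/andP; split).
- by apply: le_trans h1; lat.
- by apply: le_trans h2; lat.
- lat.
Qed.

Lemma meet_compl_split_le a b : commutes c a b ->
  b `&` c b <= ((b `&` c b) `&` a) `|` ((b `&` c b) `&` c a).
Proof.
move=> hab.
have hq : b `&` c b <= a `|` c a := hpk.2 b a.
have aq_ca : a `|` (b `&` c b) <= a `|` (b `&` c b `&` c a).
  have -> : a `|` (b `&` c b) = a `|` (c a `&` (a `|` (b `&` c b))).
    rewrite (@hmod a (c a) (a `|` (b `&` c b))) ?leUl //.
    by apply/le_anti/andP; split; lat.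
  by apply: le_trans (leU2 (lexx a) (compl_meet_join_le hab)) _; lat.
apply: (@le_trans _ _ ((b `&` c b `&` c a `|` a) `&` (b `&` c b))).
  by rewrite lexI lexx andbT joinC; apply: le_trans aq_ca; lat.
rewrite -(@hmod (b `&` c b `&` c a) a (b `&` c b)) ?leIl //; lat.
Qed.

Lemma commutes_sym a b : commutes c a b -> commutes c b a.
Proof.
move=> hab; case: (hab) => C1 C2 _; split => //.
by apply/le_anti/andP; split; [exact: meet_compl_split_le | lat].
Qed.

Lemma commutes_Sg_distributive x y : commutes c x y -> Sg_distributive c x y.
Proof.
move=> hxy.
have x_pair_y := commutes_pair hxy.
have y_pair_x := commutes_pair (commutes_sym hxy).
have hDx := pair_lattice_distr x (c x).
have y_over : distr_over y (pair_lattice x (c x)).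
  by apply/pair_distr_over/y_pair_x; do 2 right; left.
have hD1 := adjoin_distr hmod hDx y_over.
have cy_over : distr_over (c y) (adjoin (pair_lattice x (c x)) y).
  apply: (distr_over_adjoin hmod hDx y_over _ _ x_pair_y); apply: pair_distr_over.
  - by apply: y_pair_x; do 3 right; left.
  - by apply: y_pair_x; right; left.
have hD2 := adjoin_distr hmod hD1 cy_over.
have Sg_D2 : forall s, Sg c x y s -> adjoin (adjoin (pair_lattice x (c x)) y) (c y) s.
  apply: (Sg_sub hpk.1 hD2).
  - by do 2 apply: mem_adjoin; do 2 right; left.
  - by do 2 apply: mem_adjoin; do 3 right; left.
  - exact: mem_adjoin _ (adjoin_self _ hDx).
  - exact: adjoin_self _ hD1.
by move=> a b e ha hb he; apply: (sub_distr hD2); apply: Sg_D2.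
Qed.

Lemma Sg_distributive_commutes x y : Sg_distributive c x y -> commutes c x y.
Proof.
move=> hSg.
have sx : Sg c x y x by constructor.
have sy : Sg c x y y by constructor.
have scx : Sg c x y (c x) by apply: Sg_compl.
have scy : Sg c x y (c y) by apply: Sg_compl.
have sxcx : Sg c x y (x `&` c x) by apply: Sg_meet.
split; [exact: hSg | exact: hSg |].
by rewrite -(hSg _ _ _ sxcx sy scy) (meet_l (hpk.2 x y)).
Qed.

End PseudoKleene.

Theorem theorem4p14 (d : Order.disp_t) (L : tbLatticeType d) (c : L -> L)
    (hpk : pseudo_kleene c) (hmod : @modular_lattice d L) (x y : L) :
  commutes c x y <-> Sg_distributive c x y.
Proof.
split; [exact: commutes_Sg_distributive | exact: Sg_distributive_commutes].
Qed.
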